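(* Let $p_n\in(0,1)$ with $p_n\to1$, let $\tilde K=\tilde K_n=\frac{2\ln n}{1-p_n}$, and let $r_n>0$ satisfy $r_n=o(\tilde K^2)$. Then there are positive sequences $\delta_n\to0$ and $\varepsilon_n\to0$ with $\delta_n\tilde K\to\infty$ such that for any sequence of non-random graphs $R_n$ with $V(R_n)=[n]$ and $e(R_n)\le r_n$, the number $X_n$ of cliques of size $\lfloor\tilde K(1+\delta_n)\rfloor$ in $G(n,p_n)\vee R_n$ satisfies $\mathbb E\,X_n\le\varepsilon_n$.
   Context: $G(n,p)$ is the Erdős–Rényi random graph on $[n]$ with each edge present independently with probability $p$. For graphs $G,R$ on the same vertex set, $G\vee R$ is the graph on that vertex set with edge set $E(G)\cup E(R)$. $e(R)$ is the number of edges of $R$. *)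

From Stdlib Require Import Reals.
From HB Require Import structures.
From mathcomp Require Import all_boot.

Set Implicit Arguments.
Unset Strict Implicit.
Unset Printing Implicit Defensive.

(* A simple graph on vertex set [n] = 'I_n is given by its edge set:
   a set of 2-element subsets of 'I_n. *)
Definition pairs (n : nat) : {set {set 'I_n}} := [set e : {set 'I_n} | #|e| == 2].

Definition is_graph (n : nat) (E : {set {set 'I_n}}) : bool := E \subset pairs n.

Definition num_edges (n : nat) (E : {set {set 'I_n}}) : nat := #|E|.

Definition is_clique (n : nat) (E : {set {set 'I_n}}) (S : {set 'I_n}) : bool :=
  [forall x in S, forall y in S, (x != y) ==> ([set x; y] \in E)].

Definition num_cliques (n : nat) (E : {set {set 'I_n}}) (k : nat) : nat :=
  #|[set S : {set 'I_n} | (#|S| == k) && is_clique E S]|.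

Definition graph_join (n : nat) (G R : {set {set 'I_n}}) : {set {set 'I_n}} := G :|: R.

(* Probability that G(n,p) equals the graph with edge set G (G \subset pairs n):
   each of the C(n,2) pairs is present independently with probability p. *)
Definition gnp_prob (n : nat) (p : R) (G : {set {set 'I_n}}) : R :=
  Rmult (pow p #|G|) (pow (Rminus 1 p) (#|pairs n| - #|G|)).

(* E[ number of k-cliques in G(n,p) \/ R ], the expectation written out as
   the finite sum over all outcomes of G(n,p). *)
Definition exp_cliques_join (n : nat) (p : R) (Rg : {set {set 'I_n}}) (k : nat) : R :=
  \big[Rplus/R0]_(G : {set {set 'I_n}} | is_graph G)
     Rmult (gnp_prob p G) (INR (num_cliques (graph_join G Rg) k)).

Definition Ktilde (p : nat -> R) (n : nat) : R :=
  Rdiv (Rmult 2 (ln (INR n))) (Rminus 1 (p n)).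

(* floor of a real, as a natural number (x >= 0 in the cases of interest) *)
Definition nat_floor (x : R) : nat := Z.to_nat (Int_part x).

Definition little_o (a b : nat -> R) : Prop :=
  forall eps : R, Rlt 0 eps ->
    exists N : nat, forall n : nat, (N <= n)%coq_nat -> Rle (Rabs (a n)) (Rmult eps (Rabs (b n))).

From Stdlib Require Import Reals Lra Lia Psatz.
From HB Require Import structures.
From mathcomp Require Import all_boot ssralg ssrnum Rstruct zify.
Import GRing.Theory Num.Theory.

Set Implicit Arguments.
Unset Strict Implicit.
Unset Printing Implicit Defensive.

(* For a k-set S let F_S be the pairs inside S that are not
      edges of R.  S is a clique of G \/ R iff F_S is contained in G, and by
      independence of the edges P(F \subset G(n,p)) = p^|F|.  Since
      |F_S| >= C(k,2) - e(R),
        E X <= C(n,k) p^(C(k,2) - e(R)) <= exp (k ln n - (1 - p)(C(k,2) - r)).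
   2. Parameters.  With L = ln n, q = 1 - p, K = 2L/q, put a = r/(K^2 + 1)
      (a -> 0 because r = o(K^2)) and delta = sqrt (a + 1/(K + 1)).  As
      K >= 2 ln n -> oo, delta -> 0, while (delta K)^2 >= K^2/(K + 1) -> oo.
   3. Exponent.  For k = floor (K(1 + delta)) an elementary estimate
      (clique_exponent_le) bounds the exponent by -L once L >= 100 and
      a <= 1/64, so E X <= 1/n for all large n; the finitely many small n are
      covered by E X <= C(n,k). *)

Local Open Scope R_scope.

Lemma sum_le (T : finType) (P : pred T) (F1 F2 : T -> R) :
  (forall x, P x -> F1 x <= F2 x) ->
  \big[Rplus/0]_(x | P x) F1 x <= \big[Rplus/0]_(x | P x) F2 x.
Proof. by move=> le_F; apply/RleP/ler_sum => x Px; apply/RleP/le_F. Qed.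

Lemma sum_const (T : finType) (A : {pred T}) (c : R) :
  \big[Rplus/0]_(x in A) c = INR #|A| * c.
Proof. by rewrite sumr_const INRE RmultE mulr_natl. Qed.

Lemma prod_const (T : finType) (A : {pred T}) (c : R) :
  \big[Rmult/1]_(x in A) c = c ^ #|A|.
Proof. by rewrite prodr_const RpowE. Qed.

Lemma INR_card (T : finType) (A : {pred T}) :
  INR #|A| = \big[Rplus/0]_x (if x \in A then 1 else 0).
Proof. by rewrite -big_mkcond sum_const Rmult_1_r. Qed.

Lemma pow_le_antitone (x : R) (m k : nat) :
  0 <= x <= 1 -> (m <= k)%N -> x ^ k <= x ^ m.
Proof.
by move=> [x0 x1] mk; rewrite !RpowE; apply/RleP/ler_wiXn2l => //; apply/RleP.
Qed.

Section FirstMoment.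
Variable n : nat.
Implicit Types (p : R) (F G Rg : {set {set 'I_n}}) (S : {set 'I_n}).

Lemma gnp_prob_ge0 p G : 0 <= p <= 1 -> 0 <= gnp_prob p G.
Proof. by move=> hp; apply: Rmult_le_pos; apply: pow_le; lra. Qed.

(* Expanding the product p^|F| =
   prod_e (f e + g e), with f e = p and g e = 1 - p (or 0 for e in F) on pairs,
   as a sum over all edge sets J yields gnp_prob p J for every graph J
   containing F and 0 for every other J. *)
Lemma gnp_prob_contains p F : F \subset pairs n ->
  \big[Rplus/0]_(G | is_graph G) (gnp_prob p G * (if F \subset G then 1 else 0))
  = p ^ #|F|.
Proof.
move=> FP; set P := pairs n.
pose f e := if e \in P then p else 0.
pose g e := if e \in P then (if e \in F then 0 else 1 - p) else 1.
have -> : p ^ #|F| = \big[Rmult/1]_e (f e + g e).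
  rewrite -prod_const big_mkcond; apply: eq_bigr => e _; rewrite /f /g.
  case eF: (e \in F); first by rewrite (subsetP FP _ eF); ring.
  by case: (e \in P); ring.
rewrite bigA_distr big_mkcond /=; apply: eq_bigr => J _.
have prod0 e : (if e \in J then f e else g e) = 0 ->
    \big[Rmult/1]_e' (if e' \in J then f e' else g e') = 0.
  by move=> He; rewrite (bigD1 e) //= He Rmult_0_l.
rewrite /is_graph -/P; case JP: (J \subset P); last first.
  move/negbT: JP => /subsetPn [e eJ eP].
  by symmetry; apply: (prod0 e); rewrite eJ /f (negbTE eP).
case FJ: (F \subset J); last first.
  move/negbT: FJ => /subsetPn [e eF eJ].
  rewrite Rmult_0_r; symmetry; apply: (prod0 e).
  by rewrite (negbTE eJ) /g (subsetP FP _ eF) eF.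
rewrite Rmult_1_r /gnp_prob.
have -> : (#|P| - #|J|)%N = #|P :\: J| by rewrite cardsD (setIidPr JP).
rewrite -!prod_const big_mkcond [X in _ * X]big_mkcond -big_split /=.
apply: eq_bigr => e _.
rewrite /f /g in_setD.
case eJ: (e \in J); first by rewrite (subsetP JP _ eJ) /=; ring.
case eP: (e \in P) => /=; last ring.
by rewrite (contraFF (subsetP FJ e) eJ); ring.
Qed.

(* The pairs inside S that are not edges of Rg: S is a clique of G \/ Rg
   exactly when all of them are edges of G. *)
Definition missing_pairs Rg S : {set {set 'I_n}} :=
  [set e in pairs n | (e \subset S) && (e \notin Rg)].

Lemma missing_pairs_sub Rg S : missing_pairs Rg S \subset pairs n.
Proof. by apply/subsetP => e; rewrite inE => /andP []. Qed.

Lemma card_missing_pairs Rg S : ('C(#|S|, 2) - #|Rg| <= #|missing_pairs Rg S|)%N.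
Proof.
have -> : missing_pairs Rg S = [set e : {set 'I_n} | e \subset S & #|e| == 2%N] :\: Rg.
  apply/setP => e; rewrite !inE.
  by case: (e \in Rg); case: (e \subset S); case: (#|e| == 2%N).
rewrite cardsD cards_draws leq_sub2l // subset_leq_card //; exact: subsetIr.
Qed.

Lemma clique_join_missing G Rg S :
  is_clique (graph_join G Rg) S -> missing_pairs Rg S \subset G.
Proof.
move=> clS; apply/subsetP => e.
rewrite inE inE => /andP [/cards2P [x [y [xy ->]]] /andP [xyS xyR]].
have xS : x \in S by apply: (subsetP xyS); rewrite !inE eqxx.
have yS : y \in S by apply: (subsetP xyS); rewrite !inE eqxx orbT.
move: clS => /forall_inP /(_ x xS) /forall_inP /(_ y yS) /implyP /(_ xy).
by rewrite in_setU (negbTE xyR) orbF.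
Qed.

(* Counting bound for a fixed outcome G: each k-clique S of G \/ Rg has all
   of its missing pairs in G. *)
Lemma num_cliques_join_le G Rg k :
  INR (num_cliques (graph_join G Rg) k)
  <= \big[Rplus/0]_(S : {set 'I_n} | #|S| == k) (if missing_pairs Rg S \subset G then 1 else 0).
Proof.
rewrite /num_cliques INR_card [X in _ <= X]big_mkcond.
apply: sum_le => S _; rewrite inE.
case: (#|S| == k) => /=; last lra.
case clS: (is_clique _ S); last by case: (_ \subset G); lra.
by rewrite (clique_join_missing clS); lra.
Qed.

Lemma exp_cliques_join_le p Rg k : 0 <= p <= 1 ->
  exp_cliques_join p Rg k <= INR 'C(n, k) * p ^ ('C(k, 2) - #|Rg|).
Proof.
move=> hp; rewrite /exp_cliques_join.
apply: (Rle_trans _ (\big[Rplus/0]_(G | is_graph G) (gnp_prob p G *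
          \big[Rplus/0]_(S : {set 'I_n} | #|S| == k) (if missing_pairs Rg S \subset G then 1 else 0)))).
  apply: sum_le => G _; apply: Rmult_le_compat_l; first exact: gnp_prob_ge0.
  exact: num_cliques_join_le.
under eq_bigr => G _ do rewrite big_distrr /=.
rewrite exchange_big /=.
under eq_bigr => S _ do rewrite gnp_prob_contains ?missing_pairs_sub //.
rewrite -[in X in _ <= X * _](card_ord n) -card_draws -sum_const.
rewrite (eq_bigl (fun S => S \in [set S : {set 'I_n} | #|S| == k])) => [|S]; last by rewrite inE.
apply: sum_le => S; rewrite inE => /eqP cardS; apply: pow_le_antitone => //.
by rewrite -cardS card_missing_pairs.
Qed.

Lemma exp_cliques_join_le_binomial p Rg k : 0 <= p <= 1 ->
  exp_cliques_join p Rg k <= INR 'C(n, k).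
Proof.
move=> hp; apply: Rle_trans (exp_cliques_join_le Rg k hp) _.
have pow_le1 : p ^ ('C(k, 2) - #|Rg|) <= 1 := pow_le_antitone hp (leq0n _).
rewrite -[X in _ <= X]Rmult_1_r; apply: Rmult_le_compat_l => //; exact: pos_INR.
Qed.

End FirstMoment.

Lemma binomial_le_pow n k : ('C(n, k) <= n ^ k)%N.
Proof.
apply: (leq_trans (leq_pmulr _ (fact_gt0 k))); rewrite bin_ffact ffact_prod.
apply: (leq_trans (leq_prod (E2 := fun _ => n) _)) => [i _|]; first exact: leq_subr.
by rewrite prod_nat_const card_ord.
Qed.

Lemma INR_expn n k : INR (n ^ k) = INR n ^ k.
Proof. by elim: k => [|k IH]; rewrite ?expn0 // expnS -multE mult_INR IH. Qed.

Lemma INR_bin2 k : 2 * INR 'C(k, 2) = INR k * (INR k - 1).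
Proof.
elim: k => [|k IH]; first by rewrite /=; ring.
by rewrite binS bin1 -plusE plus_INR S_INR; lra.
Qed.

Lemma INR_subn a b : INR a - INR b <= INR (a - b).
Proof.
case: (leqP b a) => [ba|ab]; first by rewrite -{1}(subnK ba) -plusE plus_INR; lra.
have -> : (a - b = 0)%N by apply/eqP; rewrite subn_eq0 ltnW.
by move/ltP: ab => /lt_INR /=; lra.
Qed.

Lemma nat_floor_spec x : 0 <= x -> x - 1 < INR (nat_floor x) <= x.
Proof.
move=> x0; rewrite /nat_floor; have [lo hi] := base_Int_part x.
have Int_ge0 : (0 <= Int_part x)%Z.
  suff: (-1 < Int_part x)%Z by lia.
  by apply: lt_IZR; lra.
by rewrite INR_IZR_INZ Znat.Z2Nat.id //; lra.
Qed.

Lemma exp_le (x y : R) : x <= y -> exp x <= exp y.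
Proof. by case=> [lt_xy | ->]; [left; exact: exp_increasing | right]. Qed.

Lemma exp_pow (x : R) (m : nat) : exp x ^ m = exp (INR m * x).
Proof.
elim: m => [|m IH]; first by rewrite /= Rmult_0_l exp_0.
by rewrite S_INR -tech_pow_Rmult IH -exp_plus; f_equal; ring.
Qed.

Lemma binomial_pow_le_exp (n k m : nat) (p : R) : (0 < n)%N -> 0 <= p <= 1 ->
  INR 'C(n, k) * p ^ m <= exp (INR k * ln (INR n) - (1 - p) * INR m).
Proof.
move=> n_pos hp; have INRn_pos : 0 < INR n by apply: lt_0_INR; apply/ltP.
have binom : INR 'C(n, k) <= exp (INR k * ln (INR n)).
  rewrite -ln_pow // exp_ln; last exact: pow_lt.
  by rewrite -INR_expn; apply: le_INR; apply/leP; exact: binomial_le_pow.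
have powp : p ^ m <= exp (INR m * - (1 - p)).
  rewrite -exp_pow; apply: pow_incr.
  by have := exp_ineq1_le (- (1 - p)); lra.
have -> : INR k * ln (INR n) - (1 - p) * INR m
        = INR k * ln (INR n) + INR m * - (1 - p) by ring.
rewrite exp_plus.
by apply: Rmult_le_compat => //; [exact: pos_INR | apply: pow_le; lra].
Qed.

(* Stdlib's ln is 0 outside (0, +oo). *)
Lemma ln_INR0 : ln (INR 0) = 0.
Proof. by rewrite /ln; case: Rlt_dec => // lt00; case: (Rlt_irrefl 0 lt00). Qed.

Lemma ln_INR_ge0 n : 0 <= ln (INR n).
Proof.
case: n => [|[|n]]; first by rewrite ln_INR0; lra.
  by rewrite ln_1; lra.
by rewrite -ln_1; left; apply: ln_increasing; [lra | apply: lt_1_INR; lia].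
Qed.

Lemma ln_INR_pos_inv n : 0 < ln (INR n) -> 0 < INR n.
Proof. by case: n => [|n]; [rewrite ln_INR0; lra | move=> _; apply: lt_0_INR; lia]. Qed.

Lemma INR_cv_infty : cv_infty INR.
Proof.
move=> M; have [N HN] := INR_archimed 1 M ltac:(lra).
by exists N => n Nn; have := le_INR _ _ Nn; lra.
Qed.

Lemma ln_INR_cv_infty : cv_infty (fun n => ln (INR n)).
Proof.
move=> M; have [N HN] := INR_cv_infty (exp M).
exists N => n Nn; rewrite -[M]ln_exp; apply: ln_increasing; [exact: exp_pos | exact: HN].
Qed.

Lemma cv_infty_le (u v : nat -> R) : (forall n, u n <= v n) -> cv_infty u -> cv_infty v.
Proof. by move=> uv u_infty M; have [N HN] := u_infty M; exists N => n /HN; have := uv n; lra. Qed.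

Lemma Un_cv_eventually (u v : nat -> R) (l : R) (N : nat) :
  (forall n, (N <= n)%coq_nat -> u n = v n) -> Un_cv v l -> Un_cv u l.
Proof.
move=> uv v_cv e e_pos; have [M HM] := v_cv e e_pos.
by exists (N + M)%nat => n nNM; rewrite uv; [apply: HM | ]; lia.
Qed.

(* With K q = 2L, the function k |-> k L - q C(k,2)
   equals (q k / 2)(K + 1 - k); at k ~ K(1 + d) it is about -(q K / 4) K d.
   This beats both +L and the correction q r <= 2 a L K + a as soon as
   K d >= 12 and d >= 8 a, which follow from 1 <= d^2 (K + 1), a <= d^2,
   K >= 200 and a <= 1/64. *)
Lemma clique_exponent_le (L q K a r d k : R) :
  100 <= L -> 0 < q <= 1 -> K * q = 2 * L -> 0 <= a <= 1/64 ->
  r <= a * (K * K + 1) -> 0 <= d -> 1 <= d * d * (K + 1) -> a <= d * d ->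
  K * (1 + d) - 1 < k <= K * (1 + d) ->
  k * L - q * (k * (k - 1) / 2 - r) <= - L.
Proof.
move=> hL hq hKq ha hr hd hdK hda [hk1 hk2].
have K_ge : 200 <= K by nra.
have Kd_ge : 12 <= K * d.
  have Kd_sq : 144 <= (K * d) * (K * d).
    have K_sq : 144 * (K + 1) <= K * K by nra.
    have Kd_sq_K : K * K <= (K * d) * (K * d) * (K + 1) by nra.
    nra.
  nra.
have d_ge : 8 * a <= d.
  have a_sq : (8 * a) * (8 * a) <= d * d by nra.
  nra.
have k_ge : K / 2 <= k by nra.
have main_term : k * L - q * (k * (k - 1) / 2) <= L - L * K * d / 2.
  have -> : k * L - q * (k * (k - 1) / 2) = (q * k / 2) * (K - k + 1) by nra.
  have -> : L - L * K * d / 2 = (q * K / 4) * (2 - K * d) by nra.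
  have step : (q * k / 2) * (K - k + 1) <= (q * k / 2) * (2 - K * d).
    by apply: Rmult_le_compat_l; nra.
  have k_half : 0 <= (q * k / 2 - q * K / 4) * (K * d - 2) by apply: Rmult_le_pos; nra.
  nra.
have correction : q * r <= 2 * a * L * K + a.
  have qr_le : q * r <= q * (a * (K * K + 1)) by apply: Rmult_le_compat_l; lra.
  have expand : q * (a * (K * K + 1)) = a * K * (K * q) + a * q by ring.
  by rewrite expand hKq in qr_le; nra.
have correction_le : 2 * a * L * K <= L * K * d / 4.
  have LK_d : 0 <= (L * K) * (d - 8 * a) by apply: Rmult_le_pos; nra.
  nra.
nra.
Qed.

Section Scaling.
Variables p r : nat -> R.
Hypothesis p_range : forall n, 0 < p n < 1.
Hypothesis r_pos : forall n, 0 < r n.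
Hypothesis r_small : little_o r (fun n => Ktilde p n * Ktilde p n).

Local Notation K := (Ktilde p).

Lemma Ktilde_mul n : K n * (1 - p n) = 2 * ln (INR n).
Proof. by rewrite /Ktilde; field; have := p_range n; lra. Qed.

Lemma Ktilde_ge0 n : 0 <= K n.
Proof.
apply: Rmult_le_pos; first by have := ln_INR_ge0 n; lra.
by left; apply: Rinv_0_lt_compat; have := p_range n; lra.
Qed.

Lemma Ktilde_ge_log n : 2 * ln (INR n) <= K n.
Proof. by rewrite -Ktilde_mul; have := Ktilde_ge0 n; have := p_range n; nra. Qed.

Lemma Ktilde_cv_infty : cv_infty K.
Proof.
apply: (cv_infty_le _ ln_INR_cv_infty) => n.
by have := Ktilde_ge_log n; have := ln_INR_ge0 n; lra.
Qed.

Definition budget n := r n / (K n * K n + 1).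

Lemma Ktilde_sq_pos n : 0 < K n * K n + 1.
Proof. by have := Ktilde_ge0 n; nra. Qed.

Lemma budget_ge0 n : 0 <= budget n.
Proof.
apply: Rmult_le_pos; first by left.
by left; apply: Rinv_0_lt_compat; exact: Ktilde_sq_pos.
Qed.

Lemma r_eq_budget n : r n = budget n * (K n * K n + 1).
Proof. by rewrite /budget; field; have := Ktilde_sq_pos n; lra. Qed.

Lemma budget_cv0 : Un_cv budget 0.
Proof.
move=> e e_pos; have half_pos : 0 < e / 2 by lra.
have [N HN] := r_small half_pos.
exists N => n Nn; rewrite /R_dist Rminus_0_r Rabs_pos_eq; last exact: budget_ge0.
have := HN n Nn; rewrite Rabs_pos_eq; last by left.
rewrite Rabs_pos_eq; last by have := Ktilde_ge0 n; nra.
rewrite r_eq_budget => le_r.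
have le_budget : budget n <= e / 2.
  apply: (Rmult_le_reg_r _ _ _ (Ktilde_sq_pos n)); nra.
lra.
Qed.

(* The relative overshoot delta_n: it dominates both the budget and
   1/sqrt (K + 1), and still tends to 0. *)
Definition overshoot n := sqrt (budget n + / (K n + 1)).

Lemma inv_Ktilde_pos n : 0 < / (K n + 1).
Proof. by apply: Rinv_0_lt_compat; have := Ktilde_ge0 n; lra. Qed.

Lemma overshoot_sq n : overshoot n * overshoot n = budget n + / (K n + 1).
Proof. by apply: sqrt_sqrt; have := budget_ge0 n; have := inv_Ktilde_pos n; lra. Qed.

Lemma overshoot_pos n : 0 < overshoot n.
Proof. by apply: sqrt_lt_R0; have := budget_ge0 n; have := inv_Ktilde_pos n; lra. Qed.

Lemma overshoot_sq_ge n : 1 <= overshoot n * overshoot n * (K n + 1).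
Proof.
rewrite overshoot_sq Rmult_plus_distr_r Rinv_l; last by have := Ktilde_ge0 n; lra.
by have := budget_ge0 n; have := Ktilde_ge0 n; nra.
Qed.

Lemma budget_le_overshoot_sq n : budget n <= overshoot n * overshoot n.
Proof. by rewrite overshoot_sq; have := inv_Ktilde_pos n; lra. Qed.

Lemma overshoot_cv0 : Un_cv overshoot 0.
Proof.
have inv_cv0 : Un_cv (fun n => / (K n + 1)) 0.
  apply: cv_infty_cv_0; apply: (cv_infty_le _ Ktilde_cv_infty) => n; lra.
have := CV_plus _ _ _ _ budget_cv0 inv_cv0; rewrite Rplus_0_r => sum_cv0.
by have := continuity_seq _ _ _ (continuity_pt_sqrt 0 (Rle_refl 0)) sum_cv0; rewrite sqrt_0.
Qed.

(* (delta K)^2 >= K^2 / (K + 1) >= K / 2, which tends to infinity. *)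
Lemma overshoot_Ktilde_cv_infty : cv_infty (fun n => overshoot n * K n).
Proof.
move=> M; have [N HN] := Ktilde_cv_infty (2 * M * M + 2).
exists N => n Nn; have K_ge := HN n Nn.
have := overshoot_sq_ge n; have := overshoot_pos n => d_pos d_sq.
have dK_ge0 : 0 <= overshoot n * K n by have := Ktilde_ge0 n; nra.
have dK_sq : M * M < (overshoot n * K n) * (overshoot n * K n).
  have K_sq : K n * K n <= (overshoot n * K n) * (overshoot n * K n) * (K n + 1) by nra.
  have K_half : (K n + 1) * (K n / 2) <= K n * K n by nra.
  nra.
by case: (Rle_or_lt (overshoot n * K n) M) => // dK_le; nra.
Qed.

Definition clique_size n := nat_floor (K n * (1 + overshoot n)).

Lemma clique_size_spec n :
  K n * (1 + overshoot n) - 1 < INR (clique_size n) <= K n * (1 + overshoot n).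
Proof. by apply: nat_floor_spec; have := Ktilde_ge0 n; have := overshoot_pos n; nra. Qed.

Lemma expectation_le_inv n (Rg : {set {set 'I_n}}) :
  100 <= ln (INR n) -> budget n <= 1/64 -> INR #|Rg| <= r n ->
  exp_cliques_join (p n) Rg (clique_size n) <= / INR n.
Proof.
move=> L_ge budget_le Rg_le.
have INRn_pos : 0 < INR n by apply: ln_INR_pos_inv; lra.
have n_pos : (0 < n)%N by apply/ltP/INR_lt.
set k := clique_size n; set m := ('C(k, 2) - #|Rg|)%N.
have p_le : 0 <= p n <= 1 by have := p_range n; lra.
apply: Rle_trans (exp_cliques_join_le Rg k p_le) _.
apply: Rle_trans (binomial_pow_le_exp k m n_pos p_le) _.
rewrite -[/ INR n](exp_ln (/ INR n)); last exact: Rinv_0_lt_compat.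
rewrite ln_Rinv //; apply: exp_le.
have m_ge : INR k * (INR k - 1) / 2 - r n <= INR m.
  by have := INR_subn 'C(k, 2) #|Rg|; rewrite -/m; have := INR_bin2 k; lra.
have q_range : 0 < 1 - p n <= 1 by have := p_range n; lra.
have expo := clique_exponent_le L_ge q_range (Ktilde_mul n) (conj (budget_ge0 n) budget_le)
  (Req_le _ _ (r_eq_budget n)) (Rlt_le _ _ (overshoot_pos n)) (overshoot_sq_ge n)
  (budget_le_overshoot_sq n) (clique_size_spec n).
rewrite -/k in expo.
have := Rmult_le_compat_l (1 - p n) _ _ (Rlt_le _ _ (proj1 q_range)) m_ge.
lra.
Qed.

Lemma expectation_eventually_le_inv : exists N : nat, forall n, (N <= n)%N ->
  0 < INR n /\ forall Rg : {set {set 'I_n}}, INR #|Rg| <= r n ->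
    exp_cliques_join (p n) Rg (clique_size n) <= / INR n.
Proof.
have [N1 HN1] := ln_INR_cv_infty 100.
have small_pos : 1/64 > 0 by lra.
have [N2 HN2] := budget_cv0 small_pos.
exists (N1 + N2)%N => n /leP Nn.
have L_ge : 100 <= ln (INR n) by left; apply: HN1; lia.
have budget_le : budget n <= 1/64.
  have := HN2 n ltac:(lia); rewrite /R_dist Rminus_0_r Rabs_pos_eq; last exact: budget_ge0.
  lra.
split; first by apply: ln_INR_pos_inv; lra.
by move=> Rg; apply: expectation_le_inv.
Qed.

End Scaling.

Theorem mainTheorem11 (p r : nat -> R)
  (hp : forall n : nat, Rlt 0 (p n) /\ Rlt (p n) 1)
  (hp1 : Un_cv p 1)
  (hr : forall n : nat, Rlt 0 (r n))
  (hro : little_o r (fun n => Rmult (Ktilde p n) (Ktilde p n))) :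
  exists delta eps : nat -> R,
    (forall n : nat, Rlt 0 (delta n)) /\
    (forall n : nat, Rlt 0 (eps n)) /\
    Un_cv delta 0 /\ Un_cv eps 0 /\
    cv_infty (fun n => Rmult (delta n) (Ktilde p n)) /\
    forall Rg : forall n : nat, {set {set 'I_n}},
      (forall n : nat, is_graph (Rg n)) ->
      (forall n : nat, Rle (INR (num_edges (Rg n))) (r n)) ->
      forall n : nat,
        Rle (exp_cliques_join (p n) (Rg n)
               (nat_floor (Rmult (Ktilde p n) (Rplus 1 (delta n)))))
            (eps n).
Proof.
have [N HN] := expectation_eventually_le_inv hp hr hro.
exists (overshoot p r),
  (fun n => if (N <= n)%N then / INR n else INR 'C(n, clique_size p r n) + 1).
split; first exact: overshoot_pos.
split.
  move=> n; case: leqP => [/HN [n_pos _] | _]; first exact: Rinv_0_lt_compat.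
  by have := pos_INR 'C(n, clique_size p r n); lra.
split; first exact: overshoot_cv0.
split.
  apply: (Un_cv_eventually (N := N)) (cv_infty_cv_0 _ INR_cv_infty) => n /leP Nn.
  by rewrite Nn.
split; first exact: overshoot_Ktilde_cv_infty.
move=> Rg _ Rg_le n; case: leqP => [/HN [_ bound] | _]; first exact: bound (Rg_le n).
have p_le : 0 <= p n <= 1 by have := hp n; lra.
apply: Rle_trans (exp_cliques_join_le_binomial (Rg n) (clique_size p r n) p_le) _.
lra.
Qed.
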